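(* For integers $1\le r\le n$, \[ B_q(n,r)=\frac{[2n-1]!_q\,[2r]_q}{[n+r]!_q\,[n-r]!_q} = \sum_{\pi \in \mathcal{B}(n,r)} q^{\operatorname{maj}(\pi) - \operatorname{des}(\pi)}, \] and also $B_q(n,r)=q^{-(n-r)}\left(\left[{2n-1\atop n+r-1}\right]_q-\left[{2n-1\atop n+r}\right]_q\right)$.
   Context: Let $[r]_q=1+q+\cdots+q^{r-1}$, $[n]!_q=\prod_{r=1}^n[r]_q$, and $\left[{a\atop b}\right]_q$ be the Gaussian binomial coefficient. Paths use up steps $(1,1)$ and down steps $(1,-1)$ and are written as 0-1 sequences $\pi=\pi_1\cdots\pi_\ell$, with $0$ for up and $1$ for down. The descent set is $D(\pi)=\{i:\pi_i>\pi_{i+1}\}$, $\operatorname{maj}(\pi)=\sum_{i\in D(\pi)}i$, and $\operatorname{des}(\pi)=|D(\pi)|$. $\mathcal{B}(n,r)$ is the set of paths of length $2n$ that start at the origin with an up step, end at $(2n,-2r+2)$, and never go below the line $y=-2r+2$. In particular $\mathcal{B}(n,1)$ is the set of Catalan (Dyck) paths of length $2n$. *)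

(* q-analogues are elements of {poly int}; rational
   expressions in q live in the fraction field {fraction {poly int}}. *)
From HB Require Import structures.
From mathcomp Require Import all_boot all_order all_algebra fraction.
Set Implicit Arguments. Unset Strict Implicit. Unset Printing Implicit Defensive.
Import Order.TTheory GRing.Theory Num.Theory.
Local Open Scope ring_scope.

Notation QF := {fraction {poly int}}.
Notation "x %:F" := (@FracField.tofrac _ x).

Definition qint (r : nat) : {poly int} := \sum_(i < r) 'X^i.
Definition qfact (n : nat) : {poly int} := \prod_(i < n) qint i.+1.
Definition qbinom (a b : nat) : QF :=
  if (b <= a)%N then (qfact a)%:F / ((qfact b)%:F * (qfact (a - b))%:F) else 0.

(* paths: false = up step (0), true = down step (1) *)
(* descent set (1-indexed positions i with pi_i > pi_{i+1}) *)
Definition desc_set (s : seq bool) : seq nat :=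
  [seq i.+1 | i <- iota 0 (size s).-1 & nth false s i && ~~ nth false s i.+1].
Definition maj (s : seq bool) : nat := sumn (desc_set s).
Definition des (s : seq bool) : nat := size (desc_set s).

Definition height (s : seq bool) (k : nat) : int :=
  (count negb (take k s))%:Z - (count id (take k s))%:Z.

Definition inB (n r : nat) (s : seq bool) : bool :=
  [&& size s == (2 * n)%N,
      nth true s 0 == false,
      height s (2 * n) == 2%:Z - (2 * r)%:Z &
      [forall k : 'I_(2 * n).+1, 2%:Z - (2 * r)%:Z <= height s k]].

Definition Bsum (n r : nat) : {poly int} :=
  \sum_(t : (2 * n).-tuple bool | inB n r t) 'X^(maj t - des t).

Definition Bq (n r : nat) : QF :=
  ((qfact (2 * n).-1)%:F * (qint (2 * r))%:F) /
  ((qfact (n + r))%:F * (qfact (n - r))%:F).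

From mathcomp Require Import all_boot all_order all_algebra fraction.
From mathcomp Require Import ring zify.
Set Implicit Arguments.
Unset Strict Implicit.
Unset Printing Implicit Defensive.
Import Order.TTheory GRing.Theory Num.Theory.
Local Open Scope ring_scope.

(* Deleting the initial up step of a path in B(n,r) leaves a word with a = n-r
   up and b = n+r-1 down steps whose prefix heights stay >= -L, L = 2r-1, and
   maj - des of the path is the maj of the word.  Let G(a,b) be the maj
   generating function of such words.  Splitting off the last step, and for a
   final up step also looking at the step before it, gives
     G(a+1,b+1) = G(a+1,b) + G(a,b+1) + (q^(a+b+1) - 1) G(a,b)
   for b < a+L, and G(a+1,b+1) = G(a+1,b) on the boundary b = a+L.  The
   q-reflection formula [a+b, a] - q^(L+1) [a+b, a+L+1] obeys the same
   recurrence, by the q-Pascal rule and the absorption identity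
   [k+1] [m+1, k+1] = [m+1] [m, k], and the same boundary relations, so it is G.
   On the diagonal b = a+L both it and q^(-a) ([2a+L, a+L] - [2a+L, a+L+1])
   reduce to [L+1] [2a+L, a] / [a+L+1], which is B_q(n,r). *)

Fixpoint words (m : nat) : seq (seq bool) :=
  if m is m'.+1 then [seq rcons s c | s <- words m', c <- [:: false; true]]
  else [:: [::]].

Lemma mem_words m w : (w \in words m) = (size w == m).
Proof.
elim: m w => [|m IHm] w; first by case: w.
apply/allpairsPdep/idP => [[s [c [+ _ ->]]]|].
  by rewrite IHm size_rcons => /eqP ->.
case/lastP: w => [//|s c]; rewrite size_rcons eqSS => sz_s.
by exists s, c; rewrite IHm sz_s; case: c.
Qed.

Lemma uniq_words m : uniq (words m).
Proof.
elim: m => [//|m IHm] /=.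
apply: (@allpairs_uniq _ _ _ (@rcons bool) _ [:: false; true] IHm isT).
by move=> [s1 c1] [s2 c2] _ _ /= /rcons_inj.
Qed.

Section WordSums.
Variable R : nmodType.
Implicit Types (P : pred (seq bool)) (F : seq bool -> R).

Lemma big_words_perm m s P F : uniq s -> s =i [pred w | size w == m] ->
  \sum_(w <- s | P w) F w = \sum_(w <- words m | P w) F w.
Proof.
move=> uniq_s mem_s; apply/perm_big/uniq_perm => // [|w]; first exact: uniq_words.
by rewrite mem_s mem_words.
Qed.

Lemma eq_big_words m P1 P2 F1 F2 :
  (forall w, size w = m -> P1 w = P2 w) ->
  (forall w, size w = m -> P1 w -> F1 w = F2 w) ->
  \sum_(w <- words m | P1 w) F1 w = \sum_(w <- words m | P2 w) F2 w.
Proof.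
move=> eqP12 eqF12; rewrite big_seq_cond [RHS]big_seq_cond.
apply: eq_big => [w|w /andP[]]; last by rewrite mem_words => /eqP; exact: eqF12.
by case: (boolP (w \in _)) => //; rewrite mem_words => /eqP/eqP12 ->.
Qed.

Lemma big_words_rcons m P F :
  \sum_(w <- words m.+1 | P w) F w =
  \sum_(s <- words m | P (rcons s false)) F (rcons s false) +
  \sum_(s <- words m | P (rcons s true)) F (rcons s true).
Proof.
rewrite /= big_mkcond big_flatten big_map.
rewrite [X in _ = X + _]big_mkcond [X in _ = _ + X]big_mkcond -big_split.
by apply: eq_bigr => s _; rewrite !big_cons big_nil /= addr0.
Qed.

Lemma big_words_cons m P F :
  \sum_(w <- words m.+1 | P w) F w =
  \sum_(s <- words m | P (false :: s)) F (false :: s) +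
  \sum_(s <- words m | P (true :: s)) F (true :: s).
Proof.
have cons_inj c : injective (cons c) by move=> ? ? [].
have mem_cons_map c c' s W : (c :: s \in [seq c' :: w | w <- W]) = (c == c') && (s \in W).
  by apply/mapP/andP => [[w ? [-> ->]]|[/eqP -> ?]]; [rewrite eqxx | exists s].
rewrite -(@big_words_perm m.+1
  ([seq false :: s | s <- words m] ++ [seq true :: s | s <- words m])).
- by rewrite big_cat !big_map.
- rewrite cat_uniq !(map_inj_uniq (cons_inj _ _)) uniq_words /= andbT.
  by apply/hasPn => _ /mapP [s _ ->]; rewrite mem_cons_map.
case=> [|[] s]; rewrite inE mem_cat ?mem_cons_map ?mem_words /= ?orbF //.
by apply/negbTE/norP; split; apply/mapP => -[].
Qed.

Lemma big_tuple_words m P F :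
  \sum_(u : m.-tuple bool | P u) F u = \sum_(w <- words m | P w) F w.
Proof.
rewrite -(big_map val P F) (@big_words_perm m) // => [|w].
  by rewrite map_inj_uniq ?index_enum_uniq //; exact: val_inj.
apply/mapP/idP => [[u _ ->]|/eqP sz_w]; first by rewrite inE size_tuple.
by exists (Tuple (introT eqP sz_w)); rewrite ?mem_index_enum.
Qed.

End WordSums.

Definition stays_above (L : nat) (w : seq bool) : bool :=
  all (fun k => - (L%:Z) <= height w k) (iota 0 (size w).+1).

Lemma count_negb_id w : (count negb w + count id w)%N = size w.
Proof. by rewrite addnC; exact: count_predC. Qed.

Lemma count_id_rcons s c : count id (rcons s c) = (count id s + c)%N.
Proof. by rewrite -cats1 count_cat /= addn0. Qed.

Lemma height_shape w a b : size w = (a + b)%N -> count id w = b ->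
  height w (size w) = a%:Z - b%:Z.
Proof. by rewrite /height take_size => sz_w cnt_w; have := count_negb_id w; lia. Qed.

Lemma height_rcons s c k : (k <= size s)%N -> height (rcons s c) k = height s k.
Proof. by move=> le_ks; rewrite /height -cats1 takel_cat. Qed.

Lemma height_rcons_size s c :
  height (rcons s c) (size s).+1 = height s (size s) + (if c then -1 else 1).
Proof.
rewrite /height take_size -(size_rcons s c) take_size -cats1 !count_cat /=.
by case: c => /=; lia.
Qed.

Lemma height_cons_up w k : height (false :: w) k.+1 = height w k + 1.
Proof. by rewrite /height /=; lia. Qed.

Lemma stays_above_size L w : stays_above L w -> - (L%:Z) <= height w (size w).
Proof. by move/allP/(_ (size w)); rewrite mem_iota ltnSn; apply. Qed.

Lemma stays_above_rcons L s c :
  stays_above L (rcons s c) =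
  stays_above L s && (- (L%:Z) <= height (rcons s c) (size s).+1).
Proof.
rewrite /stays_above size_rcons -addn1 iotaD all_cat add0n [all _ (iota _ 1)]/= andbT.
congr andb; apply: eq_in_all => k; rewrite mem_iota => /andP [_ lt_ks].
by rewrite height_rcons.
Qed.

Lemma desc_set_rcons s c :
  desc_set (rcons s c) =
  desc_set s ++ (if last false s && ~~ c then [:: size s] else [::]).
Proof.
case/lastP: s => [//|s x]; rewrite /desc_set !size_rcons -[(size s).+1.-1]/(size s).
have -> : ((size s).+2.-1 = size s + 1)%N by rewrite addn1.
rewrite iotaD add0n filter_cat map_cat last_rcons; congr (_ ++ _).
  congr map; apply: eq_in_filter => i; rewrite mem_iota => /andP [_ lt_is].
  have lt_iSs : (i < (size s).+1)%N by rewrite ltnS ltnW.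
  by rewrite !nth_rcons !size_rcons lt_iSs ltnS lt_is.
by rewrite /= !nth_rcons !size_rcons ltnSn ltnn eqxx /= ltnn eqxx; case: x; case: c.
Qed.

Lemma maj_rcons s c :
  maj (rcons s c) = (maj s + (if last false s && ~~ c then size s else 0))%N.
Proof. by rewrite /maj desc_set_rcons sumn_cat; case: ifP; rewrite /= ?addn0. Qed.

Lemma maj_des_cons_up w : (maj (false :: w) - des (false :: w))%N = maj w.
Proof.
rewrite /maj /des; have -> : desc_set (false :: w) = map S (desc_set w).
  case: w => [//|x w]; rewrite /desc_set /= -add1n iotaDl filter_map -map_comp.
  by congr map.
rewrite size_map; suff -> : forall D, sumn (map S D) = (sumn D + size D)%N by rewrite addnK.
by elim=> //= d D ->; lia.
Qed.

Section BallotSum.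
Variables (R : comPzRingType) (x : R) (L : nat).

Definition ballot_gf (a b : nat) : R :=
  \sum_(w <- words (a + b) | (count id w == b) && stays_above L w) x ^+ maj w.

(* The empty word counts as ending with an up step, so [ballot_gf_split] holds
   for all [a], [b]. *)
Definition ballot_gf_last (c : bool) (a b : nat) : R :=
  \sum_(w <- words (a + b) | [&& count id w == b, stays_above L w & last false w == c])
    x ^+ maj w.

Lemma ballot_gf00 : ballot_gf 0 0 = 1.
Proof.
rewrite /ballot_gf /= big_cons big_nil /= addr0.
by rewrite /stays_above /height /= ifT // andbT; lia.
Qed.

Lemma ballot_gf_split a b :
  ballot_gf a b = ballot_gf_last false a b + ballot_gf_last true a b.
Proof.
rewrite /ballot_gf (bigID (fun w => last false w)) addrC.
by congr (_ + _); apply: eq_bigl => w; rewrite -andbA; case: (last false w).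
Qed.

Lemma ballot_gf_last_down a b :
  ballot_gf_last true a b.+1 = if (b < a + L)%N then ballot_gf a b else 0.
Proof.
rewrite /ballot_gf_last addnS big_words_rcons [X in X + _]big1 ?add0r => [|s]; last first.
  by rewrite last_rcons /= !andbF.
rewrite (eq_big_words (P2 := fun s => [&& count id s == b, stays_above L s & (b < a + L)%N])
                      (F2 := fun s => x ^+ maj s)).
- case: ifP => _; last by apply: big1 => s; rewrite !andbF.
  by apply: eq_bigl => s; rewrite andbT.
- move=> s sz_s; rewrite count_id_rcons addn1 eqSS stays_above_rcons last_rcons eqxx andbT.
  rewrite height_rcons_size; case: eqP => //= /(height_shape sz_s) ->.
  by congr andb; apply/idP/idP; lia.
by move=> s _ _; rewrite maj_rcons andbF addn0.
Qed.

(* A final up step adds a descent at position [a + b] iff the word before it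
   ends with a down step. *)
Lemma ballot_gf_last_up a b :
  ballot_gf_last false a.+1 b = ballot_gf a b + (x ^+ (a + b) - 1) * ballot_gf_last true a b.
Proof.
rewrite /ballot_gf_last addSn big_words_rcons [X in _ + X]big1 ?addr0 => [|s]; last first.
  by rewrite last_rcons /= !andbF.
rewrite (eq_big_words (P2 := fun s => (count id s == b) && stays_above L s)
  (F2 := fun s => x ^+ maj s + (if last false s then (x ^+ (a + b) - 1) * x ^+ maj s else 0))).
- rewrite big_split /= -big_mkcondr -mulr_sumr; congr (_ + _ * _).
  by apply: eq_bigl => s; rewrite andbA eqb_id.
- move=> s sz_s; rewrite count_id_rcons addn0 stays_above_rcons last_rcons eqxx andbT.
  have [/stays_above_size h_ge|] := boolP (stays_above L s); last by rewrite !andbF.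
  have h_up : - (L%:Z) <= height (rcons s false) (size s).+1 by rewrite height_rcons_size; lia.
  by rewrite h_up.
move=> s sz_s _; rewrite maj_rcons andbT sz_s.
by case: (last false s); rewrite ?addn0 ?addr0 // exprD; ring.
Qed.

Lemma ballot_gf_last_true0 a : ballot_gf_last true a 0 = 0.
Proof.
apply: big1 => w /and3P [/eqP cnt_w _ /eqP last_w].
have true_in_w : true \in w by move: (mem_last false w); rewrite last_w inE.
by have /hasPn/(_ _ true_in_w) : ~~ has id w by rewrite has_count cnt_w.
Qed.

Lemma ballot_gf_last_false0 b : ballot_gf_last false 0 b.+1 = 0.
Proof.
rewrite /ballot_gf_last big_seq_cond.
apply: big1 => w /andP [+ /and3P [/eqP cnt_w _ /eqP last_w]].
rewrite mem_words add0n => /eqP sz_w.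
have /allP all_w : all id w by rewrite all_count cnt_w sz_w.
case: w {cnt_w} sz_w last_w all_w => [//|c w] _ /= last_w all_w.
by have := all_w _ (mem_last c w); rewrite last_w.
Qed.

End BallotSum.

Lemma rmorph_ballot_gf (R S : comPzRingType) (f : {rmorphism R -> S}) (x : R) L a b :
  f (ballot_gf x L a b) = ballot_gf (f x) L a b.
Proof. by rewrite rmorph_sum; apply: eq_bigr => w _; rewrite rmorphXn. Qed.

Section QBinomial.
Variables (F : fieldType) (t : F).

Definition qnum (k : nat) : F := \sum_(i < k) t ^+ i.
Definition qfac (k : nat) : F := \prod_(i < k) qnum i.+1.
Definition qbin (m k : nat) : F :=
  if (k <= m)%N then qfac m / (qfac k * qfac (m - k)) else 0.

Lemma qnum0 : qnum 0 = 0.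
Proof. exact: big_ord0. Qed.

Lemma qnumD m n : qnum (m + n) = qnum m + t ^+ m * qnum n.
Proof.
rewrite /qnum big_split_ord mulr_sumr; congr (_ + _).
by apply: eq_bigr => i _; rewrite exprD.
Qed.

Lemma subr1_qnum k : (t - 1) * qnum k = t ^+ k - 1.
Proof.
elim: k => [|k IHk]; first by rewrite qnum0 mulr0 expr0 subrr.
by rewrite -addn1 qnumD mulrDr IHk /qnum big_ord1 exprD; ring.
Qed.

Lemma qfac0 : qfac 0 = 1.
Proof. exact: big_ord0. Qed.

Lemma qfacS k : qfac k.+1 = qfac k * qnum k.+1.
Proof. exact: big_ord_recr. Qed.

Hypothesis qnum_neq0 : forall k, qnum k.+1 != 0.

Lemma qfac_neq0 k : qfac k != 0.
Proof. by elim: k => [|k IHk]; rewrite ?qfac0 ?oner_neq0 // qfacS mulf_neq0. Qed.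

Lemma qbinE m k : (k <= m)%N -> qbin m k = qfac m / (qfac k * qfac (m - k)).
Proof. by rewrite /qbin => ->. Qed.

Lemma qbin_small m k : (m < k)%N -> qbin m k = 0.
Proof. by rewrite /qbin ltnNge => /negbTE ->. Qed.

Lemma qbin0 m : qbin m 0 = 1.
Proof. by rewrite qbinE ?leq0n // qfac0 subn0 mul1r divff ?qfac_neq0. Qed.

Lemma qbinn m : qbin m m = 1.
Proof. by rewrite qbinE ?leqnn // subnn qfac0 mulr1 divff ?qfac_neq0. Qed.

Lemma qbin_sym_add a b : qbin (a + b) b = qbin (a + b) a.
Proof.
by rewrite (qbinE (leq_addl a b)) (qbinE (leq_addr b a)) addnK addKn [_ b * _]mulrC.
Qed.

Lemma qbin_pascal m k : qbin m.+1 k.+1 = qbin m k + t ^+ k.+1 * qbin m k.+1.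
Proof.
case: (ltngtP k m) => [lt_km|lt_mk|<-]; last first.
- by rewrite !qbinn qbin_small ?ltnSn // mulr0 addr0.
- by rewrite !qbin_small ?mulr0 ?addr0 // ltnS ltnW.
have le_km := ltnW lt_km.
rewrite (qbinE (le_km : k.+1 <= m.+1)%N) (qbinE le_km) (qbinE lt_km) subSS.
have [j ejm] : exists j, (m - k = j.+1)%N by exists (m - k.+1)%N; lia.
have -> : (m - k.+1 = j)%N by lia.
have qnum_m : qnum m.+1 = qnum k.+1 + t ^+ k.+1 * qnum j.+1.
  by rewrite -qnumD; congr qnum; lia.
rewrite ejm !qfacS qnum_m; field.
by rewrite ?qfac_neq0 ?qnum_neq0.
Qed.

Lemma qbin_absorb m k : qnum k.+1 * qbin m.+1 k.+1 = qnum m.+1 * qbin m k.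
Proof.
case: (leqP k m) => [le_km|lt_mk]; last by rewrite !qbin_small ?mulr0.
rewrite (qbinE (le_km : k.+1 <= m.+1)%N) (qbinE le_km) subSS !qfacS; field.
by rewrite ?qfac_neq0 ?qnum_neq0.
Qed.

Lemma qbin_absorb_sub m k : qnum k.+1 * qbin m k.+1 = qnum (m - k) * qbin m k.
Proof.
case: (ltngtP k m) => [lt_km|lt_mk|->]; last first.
- by rewrite subnn qnum0 qbin_small ?ltnSn // mulr0 mul0r.
- by rewrite !qbin_small ?mulr0 // ltnW.
rewrite (qbinE lt_km) (qbinE (ltnW lt_km)).
have [j ejm] : exists j, (m - k = j.+1)%N by exists (m - k.+1)%N; lia.
have -> : (m - k.+1 = j)%N by lia.
rewrite ejm !qfacS; field.
by rewrite ?qfac_neq0 ?qnum_neq0.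
Qed.

Lemma qbin_maj_rec m k :
  qbin m.+2 k.+1 = qbin m.+1 k.+1 + qbin m.+1 k + (t ^+ m.+1 - 1) * qbin m k.
Proof.
have absorb : (t ^+ k.+1 - 1) * qbin m.+1 k.+1 = (t ^+ m.+1 - 1) * qbin m k.
  by rewrite -!subr1_qnum -!mulrA qbin_absorb.
by rewrite qbin_pascal -absorb; ring.
Qed.

Definition ballot_form (L a b : nat) : F :=
  qbin (a + b) a - t ^+ L.+1 * qbin (a + b) (a + L.+1).

Lemma ballot_form_rec L a b :
  ballot_form L a.+1 b.+1 =
  ballot_form L a.+1 b + ballot_form L a b.+1 + (t ^+ (a + b).+1 - 1) * ballot_form L a b.
Proof. by rewrite /ballot_form !addSn !addnS !qbin_maj_rec; ring. Qed.

Lemma ballot_form_no_down L a : ballot_form L a 0 = 1.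
Proof.
by rewrite /ballot_form addn0 qbinn (@qbin_small a) ?mulr0 ?subr0 //; lia.
Qed.

Lemma ballot_form_no_up L b : (b <= L)%N -> ballot_form L 0 b = 1.
Proof. by move=> le_bL; rewrite /ballot_form add0n qbin0 qbin_small ?mulr0 ?subr0. Qed.

Lemma qbin_diag_absorb L a :
  qnum (a + L).+1 * qbin (a + (a + L)) (a + L).+1 = qnum a * qbin (a + (a + L)) a.
Proof. by rewrite qbin_absorb_sub addnK qbin_sym_add. Qed.

Lemma ballot_form_diag L a :
  ballot_form L a (a + L) = qnum L.+1 * qbin (a + (a + L)) a / qnum (a + L).+1.
Proof.
apply: (mulfI (qnum_neq0 (a + L))); rewrite [RHS]mulrC (divfK (qnum_neq0 _)).
rewrite /ballot_form addnS mulrBr mulrCA qbin_diag_absorb.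
have -> : qnum (a + L).+1 = qnum L.+1 + t ^+ L.+1 * qnum a.
  by rewrite -qnumD; congr qnum; lia.
ring.
Qed.

Lemma qbin_diff_diag L a :
  qbin (a + (a + L)) (a + L) - qbin (a + (a + L)) (a + L).+1 =
  t ^+ a * qnum L.+1 * qbin (a + (a + L)) a / qnum (a + L).+1.
Proof.
apply: (mulfI (qnum_neq0 (a + L))); rewrite [RHS]mulrC (divfK (qnum_neq0 _)).
rewrite mulrBr qbin_diag_absorb qbin_sym_add.
have -> : qnum (a + L).+1 = qnum a + t ^+ a * qnum L.+1 by rewrite -qnumD addnS.
ring.
Qed.

(* At the boundary [b = a + L] the term [ballot_gf a b.+1] drops out of the
   recurrence of [ballot_gf]; this is the matching identity for [ballot_form]. *)
Lemma ballot_form_diag_succ L a :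
  ballot_form L a.+1 (a + L).+1 = ballot_form L a.+1 (a + L).
Proof.
set N := (a + (a + L))%N.
have qbin_N : qbin N.+1 a = qnum N.+1 * qbin N a / qnum (a + L).+1.
  apply: (mulfI (qnum_neq0 (a + L))); rewrite [RHS]mulrC (divfK (qnum_neq0 _)).
  rewrite -qbin_absorb (qbin_absorb_sub N.+1 a).
  by congr (qnum _ * _); rewrite /N; lia.
have t_L : t ^+ L.+1 = (t - 1) * qnum L.+1 + 1 by rewrite subr1_qnum subrK.
rewrite ballot_form_rec -addrA [X in _ + X](_ : _ = 0) ?addr0 //.
rewrite ballot_form_diag /ballot_form -(addnS a L) qbin_sym_add !addnS -/N qbin_N.
by rewrite -subr1_qnum t_L; ring.
Qed.

Lemma ballot_gf_closed L a b :
  ballot_gf t L a b = if (b <= a + L)%N then ballot_form L a b else 0.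
Proof.
elim: a b => [|a IHa] b.
  elim: b => [|b IHb]; first by rewrite ballot_gf00 ballot_form_no_down.
  rewrite ballot_gf_split ballot_gf_last_false0 add0r ballot_gf_last_down IHb add0n.
  by case: ltnP => // lt_bL; rewrite ltnW // !ballot_form_no_up // ltnW.
elim: b => [|b IHb].
  rewrite ballot_gf_split ballot_gf_last_up !ballot_gf_last_true0 mulr0 !addr0 IHa.
  by rewrite !leq0n !ballot_form_no_down.
rewrite ballot_gf_split ballot_gf_last_up !ballot_gf_last_down !IHa IHb addSn ltnS.
case: ltngtP => [lt_b|_|->]; last 2 first.
- by rewrite mulr0 !addr0.
- by rewrite leqnSn mulr0 !add0r ballot_form_diag_succ.
rewrite ifT; last by lia.
by rewrite ballot_form_rec addnS; ring.
Qed.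

End QBinomial.

Lemma inB_cons_down n r w : inB n r (true :: w) = false.
Proof. by rewrite /inB /= andbF. Qed.

Lemma inB_cons_up n r w : (0 < r)%N -> (r <= n)%N -> size w = (2 * n).-1 ->
  inB n r (false :: w) = (count id w == (n + r).-1) && stays_above (2 * r).-1 w.
Proof.
move=> r_gt0 le_rn sz_w.
have sz_fw : size (false :: w) = (2 * n)%N by rewrite /= sz_w; lia.
rewrite /inB sz_fw eqxx /=; congr andb.
  have := count_negb_id w; rewrite -sz_fw /= height_cons_up /height take_size.
  by move=> cnt_w; apply/eqP/eqP; lia.
apply/forallP/allP => [above_fw k|above_w [[|k] lt_k]].
- rewrite mem_iota => /andP [_ lt_k].
  have lt_Sk : (k.+1 < (2 * n).+1)%N by lia.
  by have := above_fw (Ordinal lt_Sk); rewrite /= height_cons_up; lia.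
- by rewrite /height /=; lia.
have k_in : k \in iota 0 (size w).+1 by rewrite mem_iota; lia.
by have := above_w k k_in; rewrite /= height_cons_up; lia.
Qed.

Lemma Bsum_ballot n r : (0 < r)%N -> (r <= n)%N ->
  Bsum n r = ballot_gf 'X (2 * r).-1 (n - r) (n + r).-1.
Proof.
move=> r_gt0 le_rn.
rewrite /Bsum (big_tuple_words (2 * n) (inB n r) (fun w => 'X^(maj w - des w))).
have -> : (2 * n = (2 * n).-1.+1)%N by lia.
rewrite big_words_cons [X in _ + X]big1 ?addr0 => [|w]; last by rewrite inB_cons_down.
rewrite /ballot_gf (_ : (n - r + (n + r).-1 = (2 * n).-1)%N); last by lia.
apply: eq_big_words => [w sz_w|w _ _]; first exact: inB_cons_up.
by rewrite maj_des_cons_up.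
Qed.

Local Notation qX := ('X : {poly int})%:F.

Lemma qnum_qX k : qnum qX k = (qint k)%:F.
Proof. by rewrite /qnum /qint rmorph_sum; apply: eq_bigr => i _; rewrite rmorphXn. Qed.

Lemma qfac_qX k : qfac qX k = (qfact k)%:F.
Proof. by rewrite /qfac /qfact rmorph_prod; apply: eq_bigr => i _; rewrite qnum_qX. Qed.

Lemma qbin_qX m k : qbin qX m k = qbinom m k.
Proof. by rewrite /qbin /qbinom !qfac_qX. Qed.

Lemma qint_neq0 k : qint k.+1 != 0.
Proof.
apply/eqP => /(congr1 (horner^~ 1)); rewrite horner0 /qint horner_sum.
under eq_bigr do rewrite hornerXn expr1n.
by rewrite sumr_const card_ord => /eqP; rewrite pnatr_eq0.
Qed.

Lemma qnum_qX_neq0 k : qnum qX k.+1 != 0.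
Proof. by rewrite qnum_qX tofrac_eq0 qint_neq0. Qed.

Lemma Bq_qbin n r : (0 < r)%N -> (r <= n)%N ->
  Bq n r = qnum qX (2 * r) * qbin qX (2 * n).-1 (n - r) / qnum qX (n + r).
Proof.
move=> r_gt0 le_rn.
have le_top : (n - r <= (2 * n).-1)%N by lia.
have [k e_nr] : exists k, (n + r = k.+1)%N by exists (n + r).-1; lia.
rewrite /Bq (qbinE qX le_top) (_ : (2 * n).-1 - (n - r) = k)%N; last by lia.
by rewrite -!qfac_qX -!qnum_qX e_nr qfacS !invfM; ring.
Qed.

Theorem theorem1 (n r : nat) (hr1 : (1 <= r)%N) (hrn : (r <= n)%N) :
  Bq n r = (Bsum n r)%:F /\
  Bq n r = ('X^(n - r))%:F^-1 *
           (qbinom (2 * n).-1 (n + r).-1 - qbinom (2 * n).-1 (n + r)).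
Proof.
have r2_gt0 : (0 < 2 * r)%N by lia.
have e_top : ((2 * n).-1 = n - r + (n - r + (2 * r).-1))%N by lia.
have e_mid : ((n + r).-1 = n - r + (2 * r).-1)%N by lia.
have e_nr : (n + r = (n - r + (2 * r).-1).+1)%N by lia.
have Bq_diag : Bq n r = qnum qX (2 * r).-1.+1 *
    qbin qX (n - r + (n - r + (2 * r).-1)) (n - r) / qnum qX (n - r + (2 * r).-1).+1.
  by rewrite Bq_qbin // (prednK r2_gt0) -e_top -e_nr.
split.
  rewrite Bq_diag Bsum_ballot // rmorph_ballot_gf (ballot_gf_closed qnum_qX_neq0).
  by rewrite e_mid leqnn (ballot_form_diag qnum_qX_neq0).
rewrite Bq_diag -!qbin_qX rmorphXn e_top e_mid e_nr (qbin_diff_diag qnum_qX_neq0).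
by rewrite !mulrA mulVf ?mul1r // expf_neq0 // tofrac_eq0 polyX_eq0.
Qed.
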